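(* Let $n$ be even and fix $\ell,D>0$. Let $\mathcal A$ be a first-order $p$-SCLI and let $z^{(t)}$ denote its iterates. Then there are constants $c_{\mathcal A},T_{\mathcal A}>0$ such that for every $T\ge T_{\mathcal A}$ there exist $F\in\mathcal F^{\mathrm{bil}}_{n,\ell,D}$, initial points $z^{(0)},z^{(-1)},\dots,z^{(-p+1)}\in\mathcal D_D$ and $T'\in\{T,T+1,\dots,T+p-1\}$ such that the iterates of $\mathcal A$ run on $F$ from this initialization satisfy $$\mathrm{Gap}_F^{\mathcal D_{2D}}(z^{(T')})\ge\frac{c_{\mathcal A}\,\ell D^2}{\sqrt T}.$$
   Context: A first-order $p$-SCLI is specified by fixed real scalars $\alpha_0,\dots,\alpha_{p-1},\beta_0,\dots,\beta_{p-1}$: given an operator $F:\mathbb R^n\to\mathbb R^n$ and initial points $z^{(0)},z^{(-1)},\dots,z^{(-p+1)}\in\mathbb R^n$, it generates $z^{(t)}=\sum_{j=0}^{p-1}\big(\alpha_jF(z^{(t-p+j)})+\beta_jz^{(t-p+j)}\big)$ for $t=1,2,\dots$. Write $z=(x,y)$ with $x,y\in\mathbb R^{n/2}$. For $R>0$, $\mathcal D_R:=\{x:\|x\|\le R\}\times\{y:\|y\|\le R\}\subset\mathbb R^{n/2}\times\mathbb R^{n/2}$. $\mathcal F^{\mathrm{bil}}_{n,\ell,D}$ is the set of $\ell$-Lipschitz operators $F:\mathbb R^n\to\mathbb R^n$ of the form $F(x,y)=(\nabla_xf(x,y),-\nabla_yf(x,y))$ where $f(x,y)=x^\top My+b_1^\top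 x+b_2^\top y$ for some $M\in\mathbb R^{(n/2)\times(n/2)}$, $b_1,b_2\in\mathbb R^{n/2}$, such that $F$ has a unique zero $z^*$ and $z^*\in\mathcal D_D$. For such $F$ (coming from $f$), $\mathrm{Gap}_F^{\mathcal D_{2D}}(x,y):=\max_{\|y'\|\le 2D}f(x,y')-\min_{\|x'\|\le 2D}f(x',y)$ (the total gap of the two-player zero-sum game with costs $f$ and $-f$). *)

From HB Require Import structures.
From mathcomp Require Import all_boot all_order all_algebra.
From mathcomp Require Import boolp classical_sets reals.
Set Implicit Arguments. Unset Strict Implicit. Unset Printing Implicit Defensive.
Import Order.TTheory GRing.Theory Num.Theory.
Local Open Scope ring_scope.
Local Open Scope classical_set_scope.

Section Defs.
Variable R : realType.

Definition enorm (q : nat) (v : 'rV[R]_q) : R := Num.sqrt (\sum_i v ord0 i ^+ 2).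

Variable k : nat. (* k = n/2 ; a point z = (x, y) is a row vector of size k + k *)
Notation V := 'rV[R]_(k + k).

Definition inD (r : R) (z : V) : Prop :=
  enorm (lsubmx z) <= r /\ enorm (rsubmx z) <= r.

Definition bil_f (M : 'M[R]_k) (b1 b2 : 'rV[R]_k) (x y : 'rV[R]_k) : R :=
  (x *m M *m y^T) ord0 ord0 + (b1 *m x^T) ord0 ord0 + (b2 *m y^T) ord0 ord0.

(* F(x,y) = (grad_x f, - grad_y f) = (M y + b1, - M^T x - b2) *)
Definition bil_F (M : 'M[R]_k) (b1 b2 : 'rV[R]_k) (z : V) : V :=
  row_mx (rsubmx z *m M^T + b1) (- (lsubmx z *m M) - b2).

Definition lipschitz (l : R) (F : V -> V) : Prop :=
  forall z w, enorm (F z - F w) <= l * enorm (z - w).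

Definition in_Fbil (l D : R) (M : 'M[R]_k) (b1 b2 : 'rV[R]_k) : Prop :=
  lipschitz l (bil_F M b1 b2) /\
  exists zs : V, bil_F M b1 b2 zs = 0 /\
    (forall w, bil_F M b1 b2 w = 0 -> w = zs) /\ inD D zs.

Definition gap (M : 'M[R]_k) (b1 b2 : 'rV[R]_k) (r : R) (z : V) : R :=
  sup ((fun y' => bil_f M b1 b2 (lsubmx z) y') @` [set y' | enorm y' <= r])
  - inf ((fun x' => bil_f M b1 b2 x' (rsubmx z)) @` [set x' | enorm x' <= r]).

(* p-SCLI.  init i = z^{(-i)} for i < p.  The window at time t is
   win t j = z^{(t - p + 1 + j)} for j < p. *)
Variables (p : nat) (alpha beta : 'I_p -> R) (F : V -> V) (init : 'I_p -> V).

Definition initf (i : nat) : V := odflt 0 (omap init (insub i : option 'I_p)).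

Fixpoint scli_win (t : nat) : nat -> V :=
  match t with
  | 0 => fun j => initf (p.-1 - j)
  | t'.+1 => fun j =>
      if (j.+1 < p)%N then scli_win t' j.+1
      else \sum_(i < p) (alpha i *: F (scli_win t' i) + beta i *: scli_win t' i)
  end.

Definition scli_z (t : nat) : V := scli_win t p.-1.

End Defs.

(* The hard instances are games f(x,y) = m <x,y> - m s y_i that only involve the
   i-th coordinates of x and y. On that plane F is the complex affine map
   w |-> i m (s - w), so the p-SCLI becomes a linear recurrence in C with
   characteristic polynomial X^p - sum_j (beta_j - i m alpha_j) X^j.

   If sum_j beta_j <> 1 (take m = l, s = D), the recurrence has a fixed point
   which is not the zero of F, and starting there the gap stays above a constant.

   If sum_j beta_j = 1 (take s = 0), then 1 is a root for m = 0, and for small m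
   some root z satisfies |z|^2 >= 1 - c m^2: otherwise every w = 1/(1 - z) lies
   in the half-plane 2 Re w - 1 >= c m^2 |w|^2, which contradicts the values of
   sum w, sum w^2 and prod w read off the first two derivatives of the
   characteristic polynomial at 1. With m ~ 1/sqrt T and the geometric solution
   z^t u, the iterate after T steps still has modulus of order D, so the gap is
   of order m D^2 ~ D^2 / sqrt T. *)

From HB Require Import structures.
From mathcomp Require Import all_boot all_order all_algebra.
From mathcomp Require Import boolp classical_sets reals.
From mathcomp Require Import complex.
From mathcomp Require Import ring lra zify.
Set Implicit Arguments. Unset Strict Implicit. Unset Printing Implicit Defensive.
Import Order.TTheory GRing.Theory Num.Theory.
Local Open Scope ring_scope.
Local Open Scope complex_scope.

Section ComplexSqnorm.
Variable R : rcfType.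
Local Notation C := R[i].
Local Notation re := (@complex.Re R).
Local Notation im := (@complex.Im R).

Lemma complex_eta (z : C) : z = Complex (re z) (im z).
Proof. by case: z. Qed.

Lemma ReM (x y : C) : re (x * y) = re x * re y - im x * im y.
Proof. by case: x => a b; case: y. Qed.

Lemma ImM (x y : C) : im (x * y) = re x * im y + im x * re y.
Proof. by case: x => a b; case: y. Qed.

Lemma ReV (x : C) : re x^-1 = re x / (re x ^+ 2 + im x ^+ 2).
Proof. by case: x. Qed.

Lemma ImV (x : C) : im x^-1 = - im x / (re x ^+ 2 + im x ^+ 2).
Proof. by case: x => a b /=; rewrite mulNr. Qed.

Lemma Re_natr n : re n%:R = n%:R.
Proof. by rewrite -(rmorph_nat (real_complex R)). Qed.

Lemma Im_natr n : im n%:R = 0.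
Proof. by rewrite -(rmorph_nat (real_complex R)). Qed.

Lemma divc_imaginary (u v c : R) : c != 0 -> (u +i* v) / (0 +i* c) = (v / c) -i* (u / c).
Proof. by move=> c_neq0; rewrite [LHS]complex_eta ReM ImM ReV ImV /=; congr Complex; field. Qed.

Definition sqnorm (z : C) : R := re z ^+ 2 + im z ^+ 2.

Lemma sqnorm_ge0 z : 0 <= sqnorm z.
Proof. by rewrite addr_ge0 ?sqr_ge0. Qed.

Lemma sqnormR (a : R) : sqnorm a%:C = a ^+ 2.
Proof. by rewrite /sqnorm /= expr0n addr0. Qed.

Lemma sqnorm1 : sqnorm 1 = 1.
Proof. by rewrite (sqnormR 1) expr1n. Qed.

Lemma sqnormM x y : sqnorm (x * y) = sqnorm x * sqnorm y.
Proof. by rewrite /sqnorm ReM ImM; ring. Qed.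

Lemma sqnormX x n : sqnorm (x ^+ n) = sqnorm x ^+ n.
Proof. by elim: n => [|n IH]; rewrite ?sqnorm1 // !exprS sqnormM IH. Qed.

Lemma sqnorm_eq0 z : (sqnorm z == 0) = (z == 0).
Proof.
case: z => a b; rewrite /sqnorm /= paddr_eq0 ?sqr_ge0 // !sqrf_eq0.
by rewrite eq_complex.
Qed.

Lemma sqnormV z : sqnorm z^-1 = (sqnorm z)^-1.
Proof.
have [->|hz] := eqVneq z 0; first by rewrite invr0 (sqnormR 0) expr0n invr0.
rewrite -sqnorm_eq0 in hz; move: hz; rewrite /sqnorm ReV ImV => hz.
by field.
Qed.

Lemma sqnorm_prod (I : Type) (s : seq I) (f : I -> C) :
  sqnorm (\prod_(i <- s) f i) = \prod_(i <- s) sqnorm (f i).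
Proof. exact: (big_morph _ sqnormM sqnorm1). Qed.

Lemma abs_Re_Im_le (D : R) w : 0 <= D -> sqnorm w <= D ^+ 2 -> `|re w| <= D /\ `|im w| <= D.
Proof.
move=> D_ge0 w_le; have := sqr_ge0 (re w); have := sqr_ge0 (im w).
move: w_le; rewrite /sqnorm => w_le im2 re2.
by split; rewrite -ler_sqr ?nnegrE ?normr_ge0 // real_normK ?num_real //; lra.
Qed.

Lemma half_le_abs_Re_Im (D : R) w : 0 <= D -> D ^+ 2 / 2 <= sqnorm w ->
  D / 2 <= `|re w| + `|im w|.
Proof.
move=> D_ge0; rewrite /sqnorm -(real_normK (num_real (re w))) -(real_normK (num_real (im w))).
have := normr_ge0 (re w); have := normr_ge0 (im w).
move: `|re w| `|im w| => a b a_ge0 b_ge0; nra.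
Qed.

Lemma geometric_window (z : C) (D : R) (q N : nat) : (q <= N)%N -> 0 <= D ->
  exists u, (forall j, (j <= q)%N -> sqnorm (z ^+ j * u) <= D ^+ 2) /\
            Num.min 1 (sqnorm z ^+ N) * D ^+ 2 <= sqnorm (z ^+ N * u).
Proof.
move=> qN D_ge0; have [z_le1|z_gt1] := leP (sqnorm z) 1.
  exists D%:C; split => [j _|]; rewrite sqnormM sqnormR sqnormX.
    by apply: ler_piMl; rewrite ?sqr_ge0 // exprn_ile1 ?sqnorm_ge0.
  by rewrite ler_wpM2r ?sqr_ge0 // ge_min lexx orbT.
have zq_gt0 : 0 < sqnorm z ^+ q by rewrite exprn_gt0 // (lt_trans ltr01).
exists (D%:C / z ^+ q); split => [j jq|]; rewrite mulrA !sqnormM sqnormR sqnormV !sqnormX.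
  rewrite ler_pdivrMr // [leRHS]mulrC; apply: ler_wpM2r; first exact: sqr_ge0.
  by rewrite ler_eXn2l.
rewrite mulrAC -(subnK qN) exprD mulfK ?gt_eqF // ler_wpM2r ?sqr_ge0 // ge_min.
by rewrite exprn_ege1 // ltW.
Qed.

End ComplexSqnorm.

Section RealBounds.
Variable R : realFieldType.

Lemma bernoulli_ineq (x : R) n : -1 <= x -> 1 + n%:R * x <= (1 + x) ^+ n.
Proof.
move=> x_ge; elim: n => [|n IH]; first by rewrite mul0r addr0 expr0.
have x1_ge0 : 0 <= 1 + x by lra.
rewrite exprS; apply: le_trans (ler_wpM2l x1_ge0 IH); rewrite -addn1 natrD.
have := sqr_ge0 x; have := ler0n R n; nra.
Qed.

Lemma half_le_expn (x y : R) n : 0 <= y -> n%:R * y <= 1 / 2 -> 1 - y <= x ->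
  1 / 2 <= x ^+ n.
Proof.
case: n => [|n] y_ge0 ny_le x_ge; first by rewrite expr0; lra.
have y_le : y <= 1 / 2 by apply: le_trans ny_le; rewrite ler_peMl // ler1n.
have bern : 1 - n.+1%:R * y <= (1 - y) ^+ n.+1.
  by rewrite -mulrN; apply: bernoulli_ineq; lra.
by apply: le_trans (lerXn2r _ _ _ x_ge); rewrite ?nnegrE; lra.
Qed.

Lemma small_scale_exists (m0 l a : R) : 0 < m0 -> 0 < l -> 0 < a ->
  exists m1, [/\ 0 < m1, m1 <= m0, m1 <= l & a * m1 ^+ 2 <= 1 / 2].
Proof.
move=> m0_gt0 l_gt0 a_gt0; have q_gt0 : 0 < 2 * a by rewrite mulr_gt0.
exists (Num.min (Num.min m0 l) (Num.min 1 (2 * a)^-1)).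
rewrite !lt_min !ge_min m0_gt0 l_gt0 ltr01 invr_gt0 q_gt0 !lexx ?orbT; split => //.
set m1 := Num.min _ (Num.min 1 _).
have m1_le1 : m1 <= 1 by rewrite /m1 !ge_min lexx !orbT.
have m1_ge0 : 0 <= m1 by rewrite /m1 !le_min !ltW ?invr_gt0.
have m1_leq : m1 * (2 * a) <= 1 by rewrite -ler_pdivlMr // div1r /m1 !ge_min lexx !orbT.
have : m1 * (2 * a) * m1 <= 1 * m1 by apply: ler_wpM2r.
have -> : a * m1 ^+ 2 = m1 * (2 * a) * m1 / 2 by field.
lra.
Qed.

End RealBounds.

Section LogDerivative.
Variable F : fieldType.

Lemma horner_prod_XsubC_derivs (s : seq F) (x : F) : x \notin s ->
  let P := \prod_(z <- s) ('X - z%:P) in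
  let S1 := \sum_(z <- s) (x - z)^-1 in
  [/\ P.[x] = \prod_(z <- s) (x - z),
      P^`().[x] = P.[x] * S1 &
      P^`()^`().[x] = P.[x] * (S1 ^+ 2 - \sum_(z <- s) (x - z)^-2)].
Proof.
elim: s => [|z s IH] /=.
  by move=> _; rewrite !big_nil !derivC !hornerE expr0n subr0.
rewrite inE negb_or => /andP [hxz /IH [h0 h1 h2]].
have hz : x - z != 0 by rewrite subr_eq0.
rewrite !big_cons !derivM !derivXsubC !mul1r derivD derivM derivXsubC mul1r.
by rewrite !hornerE h1 h2 !h0 /=; split => //; field.
Qed.

End LogDerivative.

Section SumBounds.
Variable R : realDomainType.

Lemma ler_sum_mem (I : eqType) (s : seq I) (f : I -> R) x :
  (forall y, y \in s -> 0 <= f y) -> x \in s -> f x <= \sum_(y <- s) f y.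
Proof.
move=> f_ge0 sx; rewrite (big_rem x sx) /= lerDl big_seq.
by apply: sumr_ge0 => y /mem_rem /f_ge0.
Qed.

Lemma ler_sum_const (I : eqType) (s : seq I) (f : I -> R) (c : R) :
  (forall y, y \in s -> f y <= c) -> \sum_(y <- s) f y <= (size s)%:R * c.
Proof.
move=> f_le; rewrite mulr_natl -iter_addr_0 -count_predT -big_const_seq.
by rewrite big_seq [leRHS]big_seq; apply: ler_sum.
Qed.

End SumBounds.

Section HalfPlane.
Variable R : rcfType.
Local Notation C := R[i].
Local Notation re := (@complex.Re R).
Local Notation im := (@complex.Im R).

(* [1 - 2 Re w + d |w|^2 <= 0] for [w = 1/(1-z)] is [|z|^2 <= 1 - d] after
   multiplying by [|1 - z|^2]. *)
Lemma inv1B_halfplane (z : C) (d : R) : 0 <= d -> sqnorm z < 1 - d ->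
  d * sqnorm (1 - z)^-1 <= 2 * re (1 - z)^-1 - 1.
Proof.
move=> d_ge0; case: z => a b; rewrite /sqnorm /= !sub0r => hz.
have hN : 0 < (1 - a) ^+ 2 + (- b) ^+ 2 by nra.
set N := (1 - a) ^+ 2 + (- b) ^+ 2 in hN *.
rewrite -subr_ge0 (le_trans (_ : 0 <= (1 - a ^+ 2 - b ^+ 2 - d) / N)) //.
  by apply: divr_ge0; [lra | exact: ltW].
by rewrite le_eqVlt; apply/orP; left; apply/eqP; rewrite /N; field;
  rewrite -/N gt_eqF.
Qed.

Variable ws : seq C.

Lemma halfplane_sum_im (d K : R) : 0 < d ->
  (forall w, w \in ws -> d * sqnorm w <= 2 * re w - 1) ->
  \sum_(w <- ws) re w = K ->
  d * (\sum_(w <- ws) im w) ^+ 2 <= 2 * (size ws)%:R ^+ 2 * K.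
Proof.
move=> d_gt0 hws sumK.
have re_ge0 w : w \in ws -> 0 <= re w.
  move=> /hws; have := sqnorm_ge0 w; nra.
have im_bound w : w \in ws -> d * im w ^+ 2 <= 2 * K.
  move=> ws_w; have := hws w ws_w; rewrite -sumK.
  have := ler_sum_mem re_ge0 ws_w; have := sqr_ge0 (re w).
  rewrite /sqnorm; nra.
have K_ge0 : 0 <= K by rewrite -sumK big_seq sumr_ge0.
set Y := Num.sqrt (2 * K / d).
have abs_im w : w \in ws -> `|im w| <= Y.
  move=> ws_w; rewrite -sqrtr_sqr ler_sqrt; last by rewrite divr_ge0 ?mulr_ge0 // ltW.
  by rewrite ler_pdivlMr // mulrC im_bound.
have abs_sum : `|\sum_(w <- ws) im w| <= (size ws)%:R * Y.
  exact: le_trans (ler_norm_sum _ _ _) (ler_sum_const abs_im).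
have sum_im2 : (\sum_(w <- ws) im w) ^+ 2 <= (size ws)%:R ^+ 2 * (2 * K / d).
  rewrite -real_normK ?num_real // -(sqr_sqrtr (_ : 0 <= 2 * K / d)); last first.
    by rewrite divr_ge0 ?mulr_ge0 // ltW.
  by rewrite -exprMn lerXn2r ?nnegrE ?mulr_ge0 ?sqrtr_ge0.
have -> : 2 * (size ws)%:R ^+ 2 * K = d * ((size ws)%:R ^+ 2 * (2 * K / d)).
  by field; rewrite gt_eqF.
by rewrite ler_pM2l.
Qed.

Lemma halfplane_prod_sqnorm (K L : R) :
  (forall w, w \in ws -> 1 <= 2 * re w) ->
  \sum_(w <- ws) re w = K -> \sum_(w <- ws) (re w ^+ 2 - im w ^+ 2) = L ->
  \prod_(w <- ws) sqnorm w <= ((1 + (size ws)%:R) * K ^+ 2 + `|L|) ^+ size ws.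
Proof.
move=> hws sumK sumL.
have re_ge0 w : w \in ws -> 0 <= re w by move=> /hws; lra.
have re_le w : w \in ws -> re w ^+ 2 <= K ^+ 2.
  move=> ws_w; rewrite -sumK lerXn2r ?nnegrE ?re_ge0 ?ler_sum_mem //.
  by rewrite big_seq sumr_ge0.
have sum_im : \sum_(w <- ws) im w ^+ 2 <= (size ws)%:R * K ^+ 2 + `|L|.
  have -> : \sum_(w <- ws) im w ^+ 2 = \sum_(w <- ws) re w ^+ 2 - L.
    by rewrite -sumL sumrB opprB addrC subrK.
  by apply: lerD; [exact: ler_sum_const | rewrite -normrN ler_norm].
rewrite -[size ws]count_predT -iter_mulr_1 -big_const_seq big_seq [leRHS]big_seq.
apply: ler_prod => w ws_w; rewrite sqnorm_ge0 /sqnorm.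
have := ler_sum_mem (fun w _ => sqr_ge0 (im w)) ws_w.
have := re_le w ws_w; lra.
Qed.

End HalfPlane.

Section CharPoly.
Variable R : rcfType.
Variables (p : nat) (alpha beta : 'I_p -> R).
Local Notation C := R[i].
Local Notation re := (@complex.Re R).
Local Notation im := (@complex.Im R).

Definition scli_coef (m : R) (j : 'I_p) : C := beta j -i* (m * alpha j).

Definition scli_charpoly (m : R) : {poly C} :=
  'X^p - \sum_(j < p) scli_coef m j *: 'X^j.

Definition fmoment (c : 'I_p -> R) (k : nat) : R := \sum_(j < p) c j * (j ^_ k)%:R.

Definition fdefect (k : nat) : R := (p ^_ k)%:R - fmoment beta k.

Lemma fmoment0 c : fmoment c 0 = \sum_(j < p) c j.
Proof. by apply: eq_bigr => j _; rewrite ffactn0 mulr1. Qed.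

Lemma fdefect0 : fdefect 0 = 1 - \sum_(j < p) beta j.
Proof. by rewrite /fdefect ffactn0 fmoment0. Qed.

Lemma root_scli_charpoly m z :
  root (scli_charpoly m) z = (z ^+ p == \sum_(j < p) scli_coef m j * z ^+ j).
Proof.
rewrite /root /scli_charpoly hornerD hornerN hornerXn horner_sum subr_eq0.
by congr (_ == _); apply: eq_bigr => j _; rewrite hornerZ hornerXn.
Qed.

Lemma scli_charpoly_split m :
  exists2 rs : seq C, size rs = p & scli_charpoly m = \prod_(z <- rs) ('X - z%:P).
Proof.
have size_tail : (size (- \sum_(j < p) scli_coef m j *: 'X^j) < size ('X^p : {poly C}))%N.
  rewrite size_polyXn size_polyN ltnS; apply: leq_trans (size_sum _ _ _) _.
  apply/bigmax_leqP => j _; apply: leq_trans (size_scale_leq _ _) _.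
  by rewrite size_polyXn.
have [rs split_rs] := closed_field_poly_normal (scli_charpoly m).
have lead1 : lead_coef (scli_charpoly m) = 1 by rewrite lead_coefDl // lead_coefXn.
rewrite lead1 scale1r in split_rs; exists rs => //.
have := size_prod_XsubC rs id.
by rewrite -split_rs /scli_charpoly size_polyDl // size_polyXn => -[].
Qed.

Lemma scli_charpoly_derivn_at1 m k :
  (scli_charpoly m)^`(k).[1] = fdefect k +i* (m * fmoment alpha k).
Proof.
rewrite /scli_charpoly raddfB /= derivnXn linear_sum /= hornerD hornerN hornerMn.
rewrite hornerXn expr1n horner_sum [LHS]complex_eta /fdefect /fmoment.
have term j : (scli_coef m j *: 'X^j)^`(k).[1] = scli_coef m j * (j ^_ k)%:R.
  by rewrite derivnZ derivnXn hornerZ hornerMn hornerXn expr1n.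
congr Complex; rewrite raddfB raddf_sum /= ?Re_natr ?Im_natr ?sub0r.
  by congr (_ - _); apply: eq_bigr => j _; rewrite term ReM Re_natr Im_natr /=; ring.
by rewrite mulr_sumr -sumrN; apply: eq_bigr => j _; rewrite term ImM Re_natr Im_natr /=; ring.
Qed.

Lemma scli_charpoly_at1 m : (scli_charpoly m).[1] = fdefect 0 +i* (m * fmoment alpha 0).
Proof. by rewrite -scli_charpoly_derivn_at1 derivn0. Qed.

Section RootSums.
Variables (m : R) (rs : seq C).
Hypothesis sum_beta1 : fdefect 0 = 0.
Hypotheses (m_neq0 : m != 0) (a0_neq0 : fmoment alpha 0 != 0).
Hypothesis split_rs : scli_charpoly m = \prod_(z <- rs) ('X - z%:P).
Local Notation c0 := (m * fmoment alpha 0).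

Lemma scli_charpoly_at1_imaginary : (scli_charpoly m).[1] = 0 +i* c0.
Proof. by rewrite scli_charpoly_at1 sum_beta1. Qed.

Lemma scli_charpoly_at1_neq0 : (scli_charpoly m).[1] != 0.
Proof. by rewrite scli_charpoly_at1_imaginary eq_complex eqxx /= mulf_eq0 negb_or m_neq0. Qed.

Lemma scli_charpoly_root_neq1 : 1 \notin rs.
Proof.
apply: contra scli_charpoly_at1_neq0 => rs1.
by rewrite -/(root _ 1) split_rs root_prod_XsubC.
Qed.

Local Notation log_derivs := (horner_prod_XsubC_derivs scli_charpoly_root_neq1).

Lemma sum_inv1B_roots :
  \sum_(z <- rs) (1 - z)^-1
  = (fmoment alpha 1 / fmoment alpha 0) -i* (fdefect 1 / c0).
Proof.
have [_ ld1 _] := log_derivs; rewrite -split_rs in ld1.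
have -> : \sum_(z <- rs) (1 - z)^-1 = (scli_charpoly m)^`().[1] / (scli_charpoly m).[1].
  by rewrite ld1 mulrAC divff ?mul1r // scli_charpoly_at1_neq0.
rewrite -derivn1 scli_charpoly_derivn_at1 scli_charpoly_at1_imaginary.
by rewrite divc_imaginary ?mulf_neq0 //; congr Complex; field; apply/andP.
Qed.

Lemma sum_inv1B_roots_sqr :
  \sum_(z <- rs) (1 - z)^-2
  = (\sum_(z <- rs) (1 - z)^-1) ^+ 2
    - (fmoment alpha 2 / fmoment alpha 0) -i* (fdefect 2 / c0).
Proof.
have [_ ld1 ld2] := log_derivs; rewrite -split_rs in ld1 ld2.
have -> : (fmoment alpha 2 / fmoment alpha 0) -i* (fdefect 2 / c0)
    = (scli_charpoly m)^`()^`().[1] / (scli_charpoly m).[1].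
  rewrite -[_^`()^`()]/(_^`(2)) scli_charpoly_derivn_at1 scli_charpoly_at1_imaginary.
  by rewrite divc_imaginary ?mulf_neq0 //; congr Complex; field; apply/andP.
rewrite ld2 mulrAC divff ?mul1r ?scli_charpoly_at1_neq0 //.
by rewrite opprB addrC subrK.
Qed.

Lemma prod_sqnorm_inv1B_roots :
  \prod_(z <- rs) sqnorm (1 - z)^-1 = (c0 ^+ 2)^-1.
Proof.
have [ld0 _ _] := log_derivs; rewrite -split_rs scli_charpoly_at1_imaginary in ld0.
by rewrite -sqnorm_prod prodfV -ld0 sqnormV /sqnorm /= expr0n add0r.
Qed.

End RootSums.

Lemma scli_charpoly_root1 m :
  fdefect 0 = 0 -> fmoment alpha 0 = 0 -> root (scli_charpoly m) 1.
Proof. by move=> d0 a0; rewrite /root scli_charpoly_at1 d0 a0 mulr0. Qed.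

Lemma scli_charpoly_root_or_inside m t :
  (exists2 z, root (scli_charpoly m) z & t <= sqnorm z) \/
  exists rs, [/\ size rs = p, scli_charpoly m = \prod_(z <- rs) ('X - z%:P)
                 & {in rs, forall z, sqnorm z < t}].
Proof.
have [rs size_rs split_rs] := scli_charpoly_split m.
have [/hasP [z rs_z t_le]|/hasPn inside] := boolP (has (fun z => t <= sqnorm z) rs).
  by left; exists z; rewrite // split_rs root_prod_XsubC.
by right; exists rs; split => // z /inside; rewrite -ltNge.
Qed.

Lemma inv1B_roots_halfplane (rs : seq C) (d : R) : 0 <= d ->
  {in rs, forall z, sqnorm z < 1 - d} ->
  {in map (fun z => (1 - z)^-1) rs, forall w, d * sqnorm w <= 2 * re w - 1}.
Proof. by move=> d_ge0 inside _ /mapP [z /inside rs_z ->]; apply: inv1B_halfplane. Qed.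

Lemma scli_charpoly_root_outside m :
  let K := fmoment alpha 1 / fmoment alpha 0 in
  let B := (1 + p%:R) * K ^+ 2 + `|K ^+ 2 - fmoment alpha 2 / fmoment alpha 0| in
  0 < m -> fdefect 0 = 0 -> fdefect 1 = 0 -> fmoment alpha 0 != 0 ->
  (m * fmoment alpha 0) ^+ 2 * B ^+ p < 1 ->
  exists2 z, root (scli_charpoly m) z & 1 <= sqnorm z.
Proof.
move=> K B m_gt0 d0 d1 a0_neq0 small.
have [//|[rs [size_rs split_rs inside]]] := scli_charpoly_root_or_inside m 1.
exfalso; move: small; apply/negP; rewrite -leNgt.
have m_neq0 : m != 0 by rewrite gt_eqF.
set ws := map (fun z => (1 - z)^-1) rs.
have half w : w \in ws -> 1 <= 2 * re w.
  move=> /(@inv1B_roots_halfplane rs 0 (lexx 0)); rewrite mul0r subr_ge0; apply.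
  by move=> z /inside; rewrite subr0.
have S1E := sum_inv1B_roots d0 m_neq0 a0_neq0 split_rs.
have S2E := sum_inv1B_roots_sqr d0 m_neq0 a0_neq0 split_rs.
have sum_re : \sum_(w <- ws) re w = K by rewrite big_map -raddf_sum S1E.
have sum_re2 : \sum_(w <- ws) (re w ^+ 2 - im w ^+ 2)
    = K ^+ 2 - fmoment alpha 2 / fmoment alpha 0.
  rewrite big_map (eq_bigr (fun z => re ((1 - z)^-2))); last first.
    by move=> z _; rewrite -exprVn expr2 ReM -!expr2.
  rewrite -raddf_sum S2E S1E d1 mul0r oppr0.
  by rewrite raddfB /= mulr0 subr0 -expr2.
have := halfplane_prod_sqnorm half sum_re sum_re2.
rewrite big_map (prod_sqnorm_inv1B_roots d0 m_neq0 a0_neq0 split_rs) size_map size_rs -/B.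
have c0_gt0 : 0 < (m * fmoment alpha 0) ^+ 2.
  by rewrite lt_def sqr_ge0 sqrf_eq0 mulf_neq0 ?andbT // gt_eqF.
by rewrite -div1r ler_pdivrMr // mulrC.
Qed.

Lemma scli_charpoly_root_near m c :
  let K := fmoment alpha 1 / fmoment alpha 0 in
  0 < m -> 0 < c -> fdefect 0 = 0 -> fmoment alpha 0 != 0 ->
  2 * p%:R ^+ 2 * K * fmoment alpha 0 ^+ 2 < c * fdefect 1 ^+ 2 ->
  exists2 z, root (scli_charpoly m) z & 1 - c * m ^+ 2 <= sqnorm z.
Proof.
move=> K m_gt0 c_gt0 d0 a0_neq0 large.
have [//|[rs [size_rs split_rs inside]]] := scli_charpoly_root_or_inside m (1 - c * m ^+ 2).
exfalso; move: large; apply/negP; rewrite -leNgt.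
have m_neq0 : m != 0 by rewrite gt_eqF.
have d_gt0 : 0 < c * m ^+ 2 by rewrite mulr_gt0 // exprn_gt0.
have S1E := sum_inv1B_roots d0 m_neq0 a0_neq0 split_rs.
have sum_re : \sum_(w <- map (fun z => (1 - z)^-1) rs) re w = K.
  by rewrite big_map -raddf_sum S1E.
have := halfplane_sum_im d_gt0 (inv1B_roots_halfplane (ltW d_gt0) inside) sum_re.
rewrite big_map -raddf_sum S1E /= size_map size_rs sqrrN.
have -> : c * m ^+ 2 * (fdefect 1 / (m * fmoment alpha 0)) ^+ 2
    = c * fdefect 1 ^+ 2 / fmoment alpha 0 ^+ 2 by field; apply/andP.
by rewrite ler_pdivrMr // lt_def sqr_ge0 sqrf_eq0 a0_neq0.
Qed.

(* Either 1 is a root, or it is a double root at m = 0 and the product of the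
   roots gives the bound, or it is a simple root and their imaginary parts do. *)
Lemma scli_charpoly_root_near_circle : fdefect 0 = 0 ->
  exists m0 c, [/\ 0 < m0, 0 < c & forall m, 0 < m -> m <= m0 ->
    exists2 z, root (scli_charpoly m) z & 1 - c * m ^+ 2 <= sqnorm z].
Proof.
move=> d0; set a0 := fmoment alpha 0; set K := fmoment alpha 1 / a0.
have [a0_eq0|a0_neq0] := eqVneq a0 0.
  exists 1, 1; split=> // m _ _; exists 1.
    exact: (scli_charpoly_root1 m d0 a0_eq0).
  by rewrite (sqnorm1 R) mul1r gerBl sqr_ge0.
have a0_gt0 : 0 < `|a0| by rewrite normr_gt0.
have [d1_eq0|d1_neq0] := eqVneq (fdefect 1) 0.
  set E := ((1 + p%:R) * K ^+ 2 + `|K ^+ 2 - fmoment alpha 2 / a0|) ^+ p.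
  have E_ge0 : 0 <= E.
    by rewrite exprn_ge0 // addr_ge0 ?normr_ge0 // mulr_ge0 ?sqr_ge0 // addr_ge0.
  exists (`|a0| * (E + 1))^-1, 1; split => //; first by rewrite invr_gt0 mulr_gt0 ?ltr_wpDl.
  move=> m m_gt0 m_le.
  have [|z root_z z_out] := scli_charpoly_root_outside m_gt0 d0 d1_eq0 a0_neq0.
    rewrite -/a0 -/K -/E -real_normK ?num_real // normrM (gtr0_norm m_gt0).
    have : m * `|a0| * (E + 1) <= 1.
      by rewrite -mulrA -ler_pdivlMr ?mulr_gt0 ?ltr_wpDl // div1r.
    have : 0 <= m * `|a0| by rewrite mulr_ge0 ?ltW.
    move: (m * `|a0|) => t; nra.
  by exists z => //; rewrite mul1r (le_trans _ z_out) // gerBl sqr_ge0.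
have d1_gt0 : 0 < fdefect 1 ^+ 2 by rewrite lt_def sqr_ge0 sqrf_eq0 d1_neq0.
set c := (2 * p%:R ^+ 2 * `|K| * a0 ^+ 2 + 1) / fdefect 1 ^+ 2.
have c_gt0 : 0 < c.
  by rewrite divr_gt0 // ltr_wpDl // mulr_ge0 ?sqr_ge0 // mulr_ge0 ?normr_ge0 // mulr_ge0 ?sqr_ge0.
exists 1, c; split => // m m_gt0 _; apply: scli_charpoly_root_near => //.
rewrite /c divfK ?gt_eqF // -/a0 -/K.
have : K <= `|K| := ler_norm K.
have : 0 <= 2 * p%:R ^+ 2 * a0 ^+ 2 by rewrite mulr_ge0 ?sqr_ge0 // mulr_ge0 ?sqr_ge0.
nra.
Qed.

End CharPoly.

Section EuclideanNorm.
Variable R : realType.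

Lemma enorm_ge0 q (v : 'rV[R]_q) : 0 <= enorm v.
Proof. exact: sqrtr_ge0. Qed.

Lemma enorm_sqr q (v : 'rV[R]_q) : enorm v ^+ 2 = \sum_i v ord0 i ^+ 2.
Proof. by rewrite sqr_sqrtr // sumr_ge0 // => i _; rewrite sqr_ge0. Qed.

Lemma enormZ q (c : R) (v : 'rV[R]_q) : enorm (c *: v) = `|c| * enorm v.
Proof.
rewrite /enorm -sqrtr_sqr -sqrtrM ?sqr_ge0 // mulr_sumr.
by congr Num.sqrt; apply: eq_bigr => i _; rewrite mxE exprMn.
Qed.

Lemma enormN q (v : 'rV[R]_q) : enorm (- v) = enorm v.
Proof. by rewrite -scaleN1r enormZ normrN1 mul1r. Qed.

Lemma enorm_row_mx q1 q2 (a : 'rV[R]_q1) (b : 'rV[R]_q2) :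
  enorm (row_mx a b) = Num.sqrt (enorm a ^+ 2 + enorm b ^+ 2).
Proof.
rewrite !enorm_sqr /enorm big_split_ord /=.
by congr (Num.sqrt (_ + _)); apply: eq_bigr => i _; rewrite (row_mxEl, row_mxEr).
Qed.

End EuclideanNorm.

Section BilinearGap.
Variables (R : realType) (k : nat).

Lemma abs_dot_le (c y : 'rV[R]_k) (r : R) : enorm y <= r ->
  `|(c *m y^T) ord0 ord0| <= (\sum_j `|c ord0 j|) * r.
Proof.
move=> y_r; rewrite mxE mulr_suml; apply: le_trans (ler_norm_sum _ _ _) _.
apply: ler_sum => j _; rewrite mxE normrM ler_wpM2l // (le_trans _ y_r) //.
rewrite /enorm -sqrtr_sqr ler_sqrt ?sumr_ge0 // => [|i _]; last exact: sqr_ge0.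
by rewrite (bigD1 j) //= lerDl sumr_ge0 // => i _; rewrite sqr_ge0.
Qed.

Lemma dotC (a b : 'rV[R]_k) : (a *m b^T) ord0 ord0 = (b *m a^T) ord0 ord0.
Proof. by rewrite !mxE; apply: eq_bigr => j _; rewrite !mxE mulrC. Qed.

Lemma gap_ge (M : 'M[R]_k) (b1 b2 : 'rV[R]_k) (r : R) (z : 'rV[R]_(k + k)) x' y' :
  enorm x' <= r -> enorm y' <= r ->
  bil_f M b1 b2 (lsubmx z) y' - bil_f M b1 b2 x' (rsubmx z) <= gap M b1 b2 r z.
Proof.
move=> x'_r y'_r; rewrite /gap lerB //.
  apply: ub_le_sup; last by exists y'.
  set c := \sum_j `|(lsubmx z *m M) ord0 j| + \sum_j `|b2 ord0 j|.
  exists (c * r + `|(b1 *m (lsubmx z)^T) ord0 ord0|) => _ [y /= y_r <-].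
  rewrite /bil_f addrAC; apply: lerD; last exact: ler_norm.
  apply: le_trans (ler_norm _) (le_trans (ler_normD _ _) _).
  by rewrite /c mulrDl; apply: lerD; apply: abs_dot_le.
apply: ge_inf; last by exists x'.
set c := \sum_j `|(rsubmx z *m M^T) ord0 j| + \sum_j `|b1 ord0 j|.
exists (- (c * r + `|(b2 *m (rsubmx z)^T) ord0 ord0|)) => _ [x /= x_r <-].
rewrite /bil_f -mulmxA -[M *m _]trmxK trmx_mul trmxK !(dotC x).
set a := ((rsubmx z *m M^T) *m x^T) ord0 ord0; set e := (b1 *m x^T) ord0 ord0.
have ae_le : `|a + e| <= c * r.
  apply: le_trans (ler_normD _ _) _.
  by rewrite /c mulrDl; apply: lerD; apply: abs_dot_le.
have := ler_norm (- (a + e)); have := ler_norm (- (b2 *m (rsubmx z)^T) ord0 ord0).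
rewrite !normrN; lra.
Qed.

End BilinearGap.

Section ComplexEmbedding.
Variables (R : realType) (k : nat) (i0 : 'I_k).
Local Notation V := 'rV[R]_(k + k).
Local Notation C := R[i].
Local Notation re := (@complex.Re R).
Local Notation im := (@complex.Im R).
Local Notation e := (delta_mx ord0 i0 : 'rV[R]_k).

Definition embedc (w : C) : V := row_mx (re w *: e) (im w *: e).

Lemma enorm_delta_scale (c : R) : enorm (c *: e) = `|c|.
Proof.
rewrite /enorm (bigD1 i0) //= big1 => [|j /negbTE ji0]; last first.
  by rewrite !mxE eqxx ji0 mulr0 expr0n.
by rewrite addr0 !mxE !eqxx mulr1 sqrtr_sqr.
Qed.

Lemma dot_delta_scale (c : R) (y : 'rV[R]_k) : ((c *: e) *m y^T) ord0 ord0 = c * y ord0 i0.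
Proof.
rewrite mxE (bigD1 i0) //= big1 => [|j /negbTE ji0]; last first.
  by rewrite !mxE eqxx ji0 mulr0 mul0r.
by rewrite addr0 !mxE !eqxx mulr1.
Qed.

Lemma embedcD w1 w2 : embedc (w1 + w2) = embedc w1 + embedc w2.
Proof. by rewrite /embedc add_row_mx !raddfD /= !scalerDl. Qed.

Lemma embedcZ (a : R) w : embedc (a%:C * w) = a *: embedc w.
Proof. by case: w => u v; rewrite /embedc scale_row_mx !scalerA /= !mul0r subr0 addr0. Qed.

Lemma embedc_sum (I : Type) (s : seq I) (f : I -> C) :
  embedc (\sum_(i <- s) f i) = \sum_(i <- s) embedc (f i).
Proof.
apply: (big_morph embedc embedcD).
by rewrite /embedc !raddf0 !scale0r row_mx0.
Qed.

Lemma inD_embedc (D : R) w : 0 <= D -> sqnorm w <= D ^+ 2 -> inD D (embedc w).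
Proof.
move=> D_ge0 /(abs_Re_Im_le D_ge0) [re_le im_le].
by rewrite /inD row_mxKl row_mxKr !enorm_delta_scale.
Qed.

Section ScalarGame.
Variables (m s : R).
Local Notation F := (bil_F (m%:M) 0 (- (m * s) *: e)).

Lemma bil_F_scalar z :
  F z = row_mx (m *: rsubmx z) (- (m *: lsubmx z) + (m * s) *: e).
Proof. by rewrite /bil_F tr_scalar_mx !mul_mx_scalar addr0 scaleNr opprK. Qed.

Lemma bil_F_embedc w : F (embedc w) = embedc ('i * m%:C * (s%:C - w)).
Proof.
rewrite bil_F_scalar /embedc row_mxKl row_mxKr !scalerA -scaleNr -scalerDl.
by case: w => u v /=; congr row_mx; congr (_ *: _); ring.
Qed.

Lemma in_Fbil_scalar (l D : R) : 0 < m -> m <= l -> 0 <= s <= D ->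
  in_Fbil l D (m%:M) 0 (- (m * s) *: e).
Proof.
move=> m_gt0 m_le /andP [s_ge0 s_le]; split.
  move=> z w.
  have -> : F z - F w = row_mx (m *: rsubmx (z - w)) (- (m *: lsubmx (z - w))).
    rewrite !bil_F_scalar opp_row_mx add_row_mx !raddfB /=; congr row_mx.
    by rewrite opprD addrACA subrr addr0.
  rewrite enorm_row_mx enormN !enormZ !exprMn -mulrDr.
  rewrite sqrtrM ?sqr_ge0 // sqrtr_sqr addrC -enorm_row_mx hsubmxK.
  by rewrite ler_wpM2r ?enorm_ge0 // normr_id gtr0_norm.
exists (row_mx (s *: e) 0); split; [|split].
- by rewrite bil_F_scalar row_mxKl row_mxKr scaler0 scalerA addNr row_mx0.
- move=> w; rewrite bil_F_scalar -row_mx0 => /eq_row_mx [].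
  move=> /eqP; rewrite scaler_eq0 gt_eqF //= => /eqP r0.
  move=> /eqP; rewrite addrC subr_eq0 -scalerA => /eqP /scalerI l_s.
  by rewrite -[w]hsubmxK r0 l_s ?gt_eqF.
- rewrite /inD row_mxKl row_mxKr enorm_delta_scale -(scale0r e) enorm_delta_scale.
  by rewrite normr0 ger0_norm //; split => //; apply: le_trans s_le.
Qed.

Lemma bil_f_scalar x y :
  bil_f (m%:M) 0 (- (m * s) *: e) x y = m * (x *m y^T) ord0 ord0 - m * s * y ord0 i0.
Proof.
rewrite /bil_f dot_delta_scale mul0mx [X in _ + X + _]mxE addr0 mul_mx_scalar.
by rewrite -scalemxAl mxE mulNr.
Qed.

Lemma gap_embedc (D : R) w : 0 < m -> 0 <= s <= D ->
  m * D * (2 * `|re w - s| + `|im w|) <= gap (m%:M) 0 (- (m * s) *: e) (2 * D) (embedc w).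
Proof.
move=> m_gt0 /andP [s_ge0 s_le]; have D_ge0 := le_trans s_ge0 s_le.
have sg_ball (c : R) : enorm ((2 * D * Num.sg c) *: e) <= 2 * D.
  rewrite enorm_delta_scale normrM normr_sg ger0_norm ?mulr_ge0 //.
  by rewrite ler_piMr ?mulr_ge0 // lern1 leq_b1.
(* Test against the best responses y' = 2D sg(Re w - s) e and x' = -2D sg(Im w) e. *)
have := gap_ge (m%:M) 0 (- (m * s) *: e) (embedc w) (sg_ball (- im w)) (sg_ball (re w - s)).
apply: le_trans.
rewrite /embedc row_mxKl row_mxKr !bil_f_scalar !dot_delta_scale !mxE !eqxx !mulr1.
set a := re w - s; set b := im w.
have -> : m * (re w * (2 * D * Num.sg a)) - m * s * (2 * D * Num.sg a)
    - (m * (2 * D * Num.sg (- b) * b) - m * s * b)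
    = m * (2 * D * (Num.sg a * a) - 2 * D * (Num.sg (- b) * b) + s * b) by rewrite /a; ring.
rewrite -normrEsg sgrN mulNr -normrEsg -mulrA ler_pM2l //.
have : - (s * b) <= D * `|b|.
  apply: (@le_trans _ _ `|s * b|); first by rewrite -normrN ler_norm.
  by rewrite normrM ger0_norm // ler_wpM2r.
lra.
Qed.

End ScalarGame.

Section Iterates.
Variables (p : nat) (alpha beta : 'I_p -> R) (F : V -> V) (init : 'I_p -> V).
Variables (g : C -> C) (om : nat -> C).
Hypothesis p_gt0 : (0 < p)%N.
Hypothesis F_embedc : forall w, F (embedc w) = embedc (g w).
Hypothesis init_embedc : forall i : 'I_p, init i = embedc (om (p.-1 - i)).
Hypothesis om_rec : forall t, om (t + p)%N =
  \sum_(i < p) ((alpha i)%:C * g (om (t + i)%N) + (beta i)%:C * om (t + i)%N).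

Lemma scli_win_embedc t j : (j < p)%N -> scli_win alpha beta F init t j = embedc (om (t + j)).
Proof.
elim: t j => [|t IH] j j_lt /=.
  have lt_p : (p.-1 - j < p)%N by rewrite (leq_ltn_trans (leq_subr _ _)) // prednK.
  rewrite /initf (insubT (fun i => i < p)%N lt_p) /= init_embedc /= add0n subKn //.
  by rewrite -ltnS prednK.
case: ifP => [jS_lt|/negbT]; first by rewrite IH // addSnnS.
rewrite -leqNgt => p_le; have -> : j = p.-1 by lia.
rewrite addSnnS prednK // om_rec embedc_sum; apply: eq_bigr => i _.
by rewrite embedcD !embedcZ -F_embedc IH.
Qed.

Lemma scli_z_embedc t : scli_z alpha beta F init t = embedc (om (t + p.-1)).
Proof. by rewrite /scli_z scli_win_embedc // prednK. Qed.

End Iterates.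

End ComplexEmbedding.

Section LowerBound.
Variables (R : realType) (k : nat) (l D : R) (p : nat) (alpha beta : 'I_p -> R).
Local Notation C := R[i].
Local Notation re := (@complex.Re R).
Local Notation im := (@complex.Im R).

Definition hard_instance (bound : R) (T : nat) : Prop :=
  exists (M : 'M[R]_k) (b1 b2 : 'rV[R]_k), in_Fbil l D M b1 b2 /\
    exists init : 'I_p -> 'rV[R]_(k + k), (forall i, inD D (init i)) /\
      exists j : 'I_p,
        bound <= gap M b1 b2 (2 * D) (scli_z alpha beta (bil_F M b1 b2) init (T + j)).

Lemma hard_instance_le b b' T : b' <= b -> hard_instance b T -> hard_instance b' T.
Proof.
move=> b'_le [M [b1 [b2 [FM [init [init_D [j b_le]]]]]]].
by exists M, b1, b2; split=> //; exists init; split=> //; exists j; apply: le_trans b_le.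
Qed.

Lemma sum_real_scalars (u v : C) :
  \sum_(i < p) ((alpha i)%:C * u + (beta i)%:C * v)
  = (\sum_(i < p) alpha i)%:C * u + (\sum_(i < p) beta i)%:C * v.
Proof. by rewrite big_split -!mulr_suml !rmorph_sum. Qed.

Variable i0 : 'I_k.
Hypotheses (l_gt0 : 0 < l) (D_gt0 : 0 < D) (p_gt0 : (0 < p)%N).
Local Notation e := (delta_mx ord0 i0 : 'rV[R]_k).

Lemma hard_instance_const : fdefect beta 0 != 0 ->
  exists2 c, 0 < c & forall T, hard_instance c T.
Proof.
set d := fdefect beta 0; set A := l * fmoment alpha 0 => d_neq0.
have sum_beta : \sum_(i < p) beta i = 1 - d by rewrite /d fdefect0 opprB addrC subrK.
clearbody d.
set N := d ^+ 2 + A ^+ 2.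
have d2_gt0 : 0 < d ^+ 2 by rewrite lt_def sqr_ge0 sqrf_eq0 d_neq0.
have N_gt0 : 0 < N by rewrite ltr_pwDl ?sqr_ge0.
(* The fixed point i A D / (d + i A) of the iteration. *)
set w : C := (A ^+ 2 * D / N) +i* (A * d * D / N).
exists (2 * l * D ^+ 2 * d ^+ 2 / N); first by rewrite divr_gt0 // mulr_gt0 // mulr_gt0 ?exprn_gt0 // mulr_gt0.
move=> T; exists l%:M, 0, (- (l * D) *: e).
split; first by apply: in_Fbil_scalar; rewrite ?lexx ?ltW.
exists (fun=> embedc i0 w); split.
  move=> _; apply: inD_embedc; first exact: ltW.
  have -> : sqnorm w = D ^+ 2 * (A ^+ 2 / N).
    by rewrite /sqnorm /w /N /=; field; rewrite -/N gt_eqF.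
  apply: ler_piMr; first exact: sqr_ge0.
  by rewrite ler_pdivrMr // mul1r lerDr sqr_ge0.
exists (Ordinal p_gt0).
have w_rec : w = \sum_(i < p) ((alpha i)%:C * ('i * l%:C * (D%:C - w)) + (beta i)%:C * w).
  rewrite sum_real_scalars sum_beta -fmoment0 /w [RHS]complex_eta.
  by rewrite !raddfD /=; congr Complex; rewrite /N /A; field; rewrite -/N gt_eqF.
rewrite (scli_z_embedc (i0 := i0) (g := fun v => 'i * l%:C * (D%:C - v)) (om := fun=> w)) //; last first.
  by move=> v; rewrite bil_F_embedc.
have D_le : 0 <= D <= D by rewrite lexx ltW.
apply: le_trans (gap_embedc _ _ l_gt0 D_le).
have -> : re w - D = - (d ^+ 2 * D / N) by rewrite /= /N; field; rewrite -/N gt_eqF.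
rewrite normrN ger0_norm; last by rewrite divr_ge0 ?(ltW N_gt0) // mulr_ge0 ?sqr_ge0 ?(ltW D_gt0).
have -> : 2 * l * D ^+ 2 * d ^+ 2 / N = l * D * (2 * (d ^+ 2 * D / N)).
  by rewrite /N; field; rewrite -/N gt_eqF.
by rewrite ler_pM2l ?mulr_gt0 // lerDl.
Qed.

Lemma scli_step_scalar m j v :
  (alpha j)%:C * ('i * m%:C * (0%:C - v)) + (beta j)%:C * v = scli_coef alpha beta m j * v.
Proof.
rewrite [LHS]complex_eta [RHS]complex_eta !raddfD /= !ReM !ImM /= !raddfB /=.
by congr Complex; rewrite ?mul0r; ring.
Qed.

Lemma geometric_scli_rec m z u : root (scli_charpoly alpha beta m) z -> forall t,
  z ^+ (t + p) * u = \sum_(i < p) ((alpha i)%:C * ('i * m%:C * (0%:C - z ^+ (t + i) * u))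
                                   + (beta i)%:C * (z ^+ (t + i) * u)).
Proof.
rewrite root_scli_charpoly => /eqP z_root t.
under eq_bigr do rewrite scli_step_scalar exprD -mulrA [z ^+ _ * _]mulrC !mulrA.
by rewrite -!mulr_suml -z_root exprD; ring.
Qed.

Lemma hard_instance_root m z (T : nat) (delta : R) :
  0 < m -> m <= l -> root (scli_charpoly alpha beta m) z ->
  0 <= delta -> 1 - delta <= sqnorm z -> (T + p.-1)%:R * delta <= 1 / 2 ->
  hard_instance (m * D ^+ 2 / 2) T.
Proof.
move=> m_gt0 m_le root_z delta_ge0 z_near small.
have [u [u_init u_last]] := geometric_window z (leq_addl T p.-1) (ltW D_gt0).
exists m%:M, 0, (- (m * 0) *: e).
split; first by apply: in_Fbil_scalar; rewrite // lexx ltW.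
exists (fun i => embedc i0 (z ^+ (p.-1 - i) * u)); split.
  by move=> i; apply: inD_embedc; rewrite ?u_init ?leq_subr ?ltW.
exists (Ordinal p_gt0); rewrite (scli_z_embedc (i0 := i0) (g := fun v => 'i * m%:C * (0%:C - v))
  (om := fun t => z ^+ t * u)) //; last first.
- exact: geometric_scli_rec.
- by move=> v; rewrite bil_F_embedc.
have half_le : 1 / 2 <= Num.min 1 (sqnorm z ^+ (T + p.-1)).
  by rewrite le_min (half_le_expn delta_ge0 small z_near) andbT; lra.
have zD := le_trans (ler_wpM2r (sqr_ge0 D) half_le) u_last.
have D_le : (0 : R) <= 0 <= D by rewrite lexx ltW.
apply: le_trans (gap_embedc _ _ m_gt0 D_le); rewrite subr0 addn0.
rewrite mul1r mulrC in zD; have := half_le_abs_Re_Im (ltW D_gt0) zD.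
set v := z ^+ _ * u => v_large.
have -> : m * D ^+ 2 / 2 = m * D * (D / 2) by field.
apply: ler_wpM2l; first by rewrite mulr_ge0 // ltW.
by have := normr_ge0 (re v); lra.
Qed.

Lemma hard_instance_sqrt : fdefect beta 0 = 0 ->
  exists2 c, 0 < c & forall T, (0 < T)%N -> hard_instance (c / Num.sqrt T%:R) T.
Proof.
move=> d0.
have [m0 [c0 [m0_gt0 c0_gt0 root_near]]] := @scli_charpoly_root_near_circle _ _ alpha beta d0.
have p_c0_gt0 : 0 < p%:R * c0 by rewrite mulr_gt0 // ltr0n.
have [m1 [m1_gt0 m1_m0 m1_l m1_small]] := small_scale_exists m0_gt0 l_gt0 p_c0_gt0.
exists (m1 * D ^+ 2 / 2); first by rewrite divr_gt0 // mulr_gt0 // exprn_gt0.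
move=> T T_gt0; set sT := Num.sqrt T%:R.
have sT2 : sT ^+ 2 = T%:R by rewrite sqr_sqrtr ?ler0n.
have sT_ge1 : 1 <= sT by rewrite -sqrtr1 ler_sqrt // ler1n.
have sT_gt0 : 0 < sT := lt_le_trans ltr01 sT_ge1.
set m := m1 / sT.
have m_gt0 : 0 < m by rewrite divr_gt0.
have m_le : m <= m1 by rewrite ler_pdivrMr // ler_peMr // ltW.
have [z root_z z_near] := root_near m m_gt0 (le_trans m_le m1_m0).
have -> : m1 * D ^+ 2 / 2 / sT = m * D ^+ 2 / 2 by rewrite /m; field; rewrite gt_eqF.
apply: (hard_instance_root m_gt0 (le_trans m_le m1_l) root_z _ z_near).
  by rewrite mulr_ge0 ?sqr_ge0 ?ltW.
have c0m : c0 * m ^+ 2 = c0 * m1 ^+ 2 / T%:R.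
  by rewrite /m expr_div_n sT2 mulrA.
have TpT : ((T + p.-1)%N%:R : R) <= p%:R * T%:R.
  by rewrite -natrM ler_nat; move: T_gt0 p_gt0; clear; nia.
rewrite c0m mulrA ler_pdivrMr ?ltr0n // (le_trans _ (ler_wpM2r (ler0n _ T) m1_small)) //.
have -> : p%:R * c0 * m1 ^+ 2 * T%:R = p%:R * T%:R * (c0 * m1 ^+ 2) by ring.
by rewrite ler_wpM2r // mulr_ge0 ?sqr_ge0 // ltW.
Qed.

End LowerBound.

Theorem theorem7 (R : realType) (n : nat) (l D : R) :
  ~~ odd n -> (0 < n)%N -> 0 < l -> 0 < D ->
  forall (p : nat) (alpha beta : 'I_p -> R), (0 < p)%N ->
  exists cA TA : R, 0 < cA /\ 0 < TA /\
    forall T : nat, TA <= T%:R ->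
    exists (M : 'M[R]_(n./2)) (b1 b2 : 'rV[R]_(n./2)),
      in_Fbil l D M b1 b2 /\
      exists init : 'I_p -> 'rV[R]_(n./2 + n./2),
        (forall i, inD D (init i)) /\
        exists k : 'I_p,
          cA * l * D ^+ 2 / Num.sqrt (T%:R)
            <= gap M b1 b2 (2 * D)
                 (scli_z alpha beta (bil_F M b1 b2) init (T + k)).
Proof.
move=> n_even n_gt0 l_gt0 D_gt0 p alpha beta p_gt0.
have half_gt0 : (0 < n./2)%N by move: n_even n_gt0; case: n => [|[|n]].
set i0 := Ordinal half_gt0.
have lD2_gt0 : 0 < l * D ^+ 2 by rewrite mulr_gt0 ?exprn_gt0.
have cA_scale c : c / (l * D ^+ 2) * l * D ^+ 2 = c.
  by rewrite -mulrA -mulrA mulrA mulfVK ?gt_eqF.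
have [d0|d_neq0] := eqVneq (fdefect beta 0) 0.
  have [c c_gt0 hard] := hard_instance_sqrt alpha i0 l_gt0 D_gt0 p_gt0 d0.
  exists (c / (l * D ^+ 2)), 1; split; first by rewrite divr_gt0.
  split => // T T_ge1; apply: hard_instance_le (hard T _); last by rewrite -(ler1n R).
  by rewrite cA_scale.
have [c c_gt0 hard] := hard_instance_const alpha i0 l_gt0 D_gt0 p_gt0 d_neq0.
exists (c / (l * D ^+ 2)), 1; split; first by rewrite divr_gt0.
split => // T T_ge1; apply: hard_instance_le (hard T).
have sT_ge1 : 1 <= Num.sqrt (T%:R : R) by rewrite -[X in X <= _]sqrtr1 ler_sqrt ?ler0n.
rewrite cA_scale ler_pdivrMr ?(lt_le_trans ltr01) //.
by rewrite ler_peMr // ltW.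
Qed.
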